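(* Let $G=\langle S_k\mid K\rangle$ be a finitely generated semigroup as described in the context, let $\mathcal{A}$ be a finite alphabet and let $X\subseteq\mathcal{A}^G$ be a tree shift. If $K$ is primitive, then for all $1\le i,j\le k$, \[ \limsup_{m\to\infty}\frac{\log p^{(s_i)}_m}{|\bar{\Delta}^{(s_i)}_m|}=\limsup_{m\to\infty}\frac{\log p^{(s_j)}_m}{|\bar{\Delta}^{(s_j)}_m|}, \] i.e. all the stem entropies $h^{(s_i)}(X)$, $1\le i\le k$, coincide (the stem entropy of $X$ exists).
   Context: Let $K$ be a $k\times k$ matrix with entries in $\{0,1\}$ indexed by $S_k=\{s_1,\dots,s_k\}$, and let $G=\langle S_k\mid K\rangle$ be the semigroup generated by $S_k$ subject to the relations $s_is_j=1_G$ if and only if $K(s_i,s_j)=0$ ($1_G$ the identity). Every $g\in G$ has a unique minimal representation $g=g_1g_2\cdots g_n$ with $g_l\in S_k$ and $K(g_l,g_{l+1})=1$; its length is $|g|=n$ (with $|1_G|=0$). For $g\in G$ and $n\ge0$ the $n$-semiball at $g$ is $\bar{\Delta}^{(g)}_n=\{gh: h\in G,\ |h|\le n,\ |gh|=|g|+|h|\}$. For a finite alphabet $\mathcal{A}$, a pattern is a map $u:H\to\mathcal{A}$ with $H\subset G$ finite; $u$ is accepted by $t\in\mathcal{A}^G$ if there is $g\in G$ with $t_{gh}=u_h$ for all $h\in H$. A tree shift is a subset $X\subseteq\mathcal{A}^G$ consisting of all $t$ that accept no pattern from some fixed set $\mathcal{F}$ of patterns. $p^{(g)}_n$ denotes the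 number of patterns $u\in\mathcal{A}^{\bar{\Delta}^{(g)}_n}$ accepted by some $t\in X$. The $i$th stem entropy is $h^{(s_i)}(X)=\limsup_{n\to\infty}\log p^{(s_i)}_n/|\bar{\Delta}^{(s_i)}_n|$. A nonnegative square matrix is primitive if some power of it has all entries positive. *)

From HB Require Import structures.
From mathcomp Require Import all_boot all_order all_algebra.
From mathcomp Require Import all_classical all_reals all_analysis.
Set Implicit Arguments. Unset Strict Implicit. Unset Printing Implicit Defensive.
Import Order.TTheory GRing.Theory Num.Theory.
Local Open Scope ring_scope.
Local Open Scope classical_set_scope.

Section Semigroup.
Variables (k : nat) (K : rel 'I_k).
(* K i j = true  <->  K(s_i,s_j) = 1 ;  K i j = false  <->  s_i s_j = 1_G *)

(* Elements of G = <S_k | K> : minimal (reduced) words g_1 ... g_n with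
   K(g_l, g_{l+1}) = 1; the empty word is 1_G. *)
Definition G := {w : seq 'I_k | sorted K w}.

Definition one : G := exist _ [::] isT.
Definition gen (i : 'I_k) : G := exist _ [:: i] isT.
Definition len (g : G) : nat := size (val g).

(* right multiplication of a reduced word by a generator, using s_i s_j = 1
   iff K(s_i,s_j) = 0 *)
Definition push (w : seq 'I_k) (s : 'I_k) : seq 'I_k :=
  match w with
  | [::] => [:: s]
  | x :: w' => if K (last x w') s then rcons w s else belast x w'
  end.

Lemma path_belast x y s : path K x (y :: s) -> path K x (belast y s).
Proof.
elim: s x y => [|z s IH] x y //=.
by case/andP=> -> /IH ->.
Qed.

Lemma sorted_push w s : sorted K w -> sorted K (push w s).
Proof.
case: w => [|x w] //= Hw.
case: ifP => Hl.
  by rewrite /= rcons_path Hw Hl.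
by case: w Hw {Hl} => [|y w] //= /path_belast.
Qed.

Lemma sorted_foldl_push w v : sorted K w -> sorted K (foldl push w v).
Proof. by elim: v w => [|s v IH] w //= Hw; apply/IH/sorted_push. Qed.

Definition mul (g h : G) : G :=
  exist _ (foldl push (val g) (val h)) (sorted_foldl_push (val h) (valP g)).

Definition ball_words (n : nat) : seq G :=
  pmap insub (flatten [seq [seq val t | t <- enum {: m.-tuple 'I_k}]
                       | m <- iota 0 n.+1]).

Definition semiball (g : G) (n : nat) : seq G :=
  undup [seq mul g h | h <- ball_words n & len (mul g h) == len g + len h].

Variable A : finType.

(* a pattern u : H -> A with H finite is given by (H, u) with H : seq G;
   it is accepted by t if t_{gh} = u_h for all h in H, for some g *)
Definition accepts (t : G -> A) (H : seq G) (u : G -> A) : Prop :=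
  exists g : G, forall h, h \in H -> t (mul g h) = u h.

Definition is_tree_shift (X : set (G -> A)) : Prop :=
  exists F : set (seq G * (G -> A)),
    forall t, X t <-> (forall p, F p -> ~ accepts t p.1 p.2).

(* A pattern on D = semiball g n is identified with the vector of its values
   indexed by positions of the (duplicate-free) list D; acceptance
   (exists g', t_{g'h} = u_h for all h in D) is unfolded accordingly. *)
Definition npatterns (X : set (G -> A)) (g : G) (n : nat) : nat :=
  let D := semiball g n in
  #| [set f : {ffun 'I_(size D) -> A} |
       `[< exists t, X t /\
             exists g' : G, forall i : 'I_(size D), t (mul g' (nth one D i)) = f i >]] |.

Definition stem_entropy (R : realType) (X : set (G -> A)) (i : 'I_k) : \bar R :=
  limn_esup (fun m => (ln ((npatterns X (gen i) m)%:R : R)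
                        / (size (semiball (gen i) m))%:R)%:E).

End Semigroup.

Definition Kmx (k : nat) (K : rel 'I_k) : 'M[int]_k :=
  \matrix_(i, j) (K i j)%:R.

Definition mxpow (k : nat) (M : 'M[int]_k) (m : nat) : 'M[int]_k :=
  iter m (fun B => M *m B) 1%:M.

Definition primitive (k : nat) (M : 'M[int]_k) : Prop :=
  exists m : nat, (0 < m)%N /\ forall i j : 'I_k, 0 < mxpow M m i j.

From Pilot Require Import Defs.
From HB Require Import structures.
From mathcomp Require Import all_boot all_order all_algebra.
From mathcomp Require Import all_classical all_reals all_analysis.
From mathcomp Require Import zify ring lra.
Set Implicit Arguments. Unset Strict Implicit. Unset Printing Implicit Defensive.
Import Order.TTheory GRing.Theory Num.Theory.

(* Let h_a be the limsup of r_a(n) = ln p_n(s_a) / w_a(n), where w_a(n) is the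
   size of the n-semiball at s_a.  The semiball of radius n+1 at s_a is s_a
   together with the disjoint translates s_a.(semiball_n(s_b)) over the b with
   K(s_a,s_b) = 1, so w_a(n+1) = 1 + sum_b w_b(n) and
   p_{n+1}(s_a) <= |A| prod_b p_n(s_b).  Hence
     r_a(n+1) <= ln|A| / w_a(n+1) + sum_b (w_b(n) / w_a(n+1)) r_b(n),
   with weights summing to less than 1 and w_a(n) -> oo.  Primitivity of K
   bounds every weight w_b(n) / w_a(n+1) below by a positive constant, so if h_a
   is maximal and h_b < h_a for a successor b of a, then r_a is eventually below
   h_a by a fixed margin, which is absurd.  So the maximum propagates along the
   edges of K and, by primitivity, to every vertex. *)

Fixpoint reach_in (k : nat) (K : rel 'I_k) (m : nat) (b c : 'I_k) : bool :=
  if m is m'.+1 then [exists d, K b d && reach_in K m' d c] else b == c.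

Lemma mxpow_reach_in k (K : rel 'I_k) m i j :
  mxpow (Kmx K) m i j != 0 -> reach_in K m i j.
Proof.
elim: m i => [|m IHm] i /=; first by rewrite mxE; case: (i == j).
rewrite mxE; apply: contraNT => /existsPn no_walk.
rewrite big1 // => d _; rewrite mxE.
case Kid: (K i d); last by rewrite mul0r.
have /negPn/eqP -> : ~~ (mxpow (Kmx K) m d j != 0).
  by apply: contra (no_walk d) => /IHm ->; rewrite Kid.
by rewrite mulr0.
Qed.

Section Semiballs.
Variables (k : nat) (K : rel 'I_k).
Local Notation G := (Defs.G K).
Local Notation push := (Defs.push K).
Local Notation mul := (Defs.mul (K := K)).
Local Notation gen := (Defs.gen K).
Local Notation semiball := (Defs.semiball (K := K)).
Local Arguments Defs.push : simpl never.

Lemma size_push w s : size (push w s) <= (size w).+1.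
Proof.
rewrite /Defs.push; case: w => [|x w] //=; case: ifP => _; first by rewrite /= size_rcons.
by rewrite size_belast leqW.
Qed.

Lemma size_foldl_push w v : size (foldl push w v) <= size w + size v.
Proof.
elim: v w => [|s v IHv] w /=; first by rewrite addn0.
by rewrite (leq_trans (IHv _)) // addnS -addSn leq_add2r size_push.
Qed.

Lemma foldl_push_path x w v : path K (last x w) v ->
  foldl push (x :: w) v = x :: w ++ v.
Proof.
elim: v w => [|s v IHv] w /=; first by rewrite cats0.
case/andP=> Ks Pv; rewrite /Defs.push Ks rcons_cons IHv ?last_rcons //.
by rewrite cat_rcons.
Qed.

Lemma path_foldl_push x w v :
  size (foldl push (x :: w) v) = size (x :: w) + size v -> path K (last x w) v.
Proof.
elim: v w => [|s v IHv] w //=; rewrite /Defs.push; case: ifP => Ks.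
  rewrite rcons_cons => Ev; rewrite /= -(last_rcons x w s) IHv //.
  by rewrite Ev /= size_rcons addnS.
move=> Ev; have := size_foldl_push (belast x w) v.
by rewrite Ev size_belast /=; lia.
Qed.

Lemma val_mul_gen a (h : G) : path K a (val h) -> val (mul (gen a) h) = a :: val h.
Proof. exact: (@foldl_push_path a [::]). Qed.

Lemma mem_ball_words n (h : G) : (h \in ball_words K n) = (len h <= n).
Proof.
rewrite /ball_words mem_pmap_sub; apply/flatten_mapP/idP.
  case=> m; rewrite mem_iota ltnS => m_le /mapP[t _ Eh].
  by rewrite /len Eh size_tuple.
move=> h_le; exists (len h); first by rewrite mem_iota ltnS.
by apply/mapP; exists (in_tuple (val h)); rewrite ?mem_enum.
Qed.

Lemma semiball_genP a n (x : G) :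
  reflect (exists2 s, val x = a :: s & path K a s && (size s <= n))
          (x \in semiball (gen a) n).
Proof.
apply: (iffP idP).
  rewrite mem_undup => /mapP[h]; rewrite mem_filter mem_ball_words.
  case/andP=> /eqP Eh h_le ->.
  have Ph : path K a (val h) by exact: (@path_foldl_push a [::]).
  by exists (val h); rewrite ?val_mul_gen ?Ph.
case=> s Ex /andP[Ps s_le]; rewrite mem_undup; apply/mapP.
exists (exist _ s (path_sorted Ps) : G); last by apply: val_inj; rewrite Ex val_mul_gen.
by rewrite mem_filter mem_ball_words s_le /len val_mul_gen //= andbT; apply/eqP.
Qed.

Lemma gen_in_semiball a n : gen a \in semiball (gen a) n.
Proof. by apply/semiball_genP; exists [::]. Qed.

Definition semiball_split (a : 'I_k) (n : nat) : seq G :=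
  gen a :: [seq mul (gen a) y | b <- [seq b <- enum 'I_k | K a b],
                                y <- semiball (gen b) n].

Lemma val_mul_gen_semiball a b n y : K a b -> y \in semiball (gen b) n ->
  val (mul (gen a) y) = a :: val y.
Proof.
by move=> Kab /semiball_genP[s Ey /andP[Ps _]]; rewrite val_mul_gen // Ey /= Kab.
Qed.

Lemma mem_semiball_split a n : semiball (gen a) n.+1 =i semiball_split a n.
Proof.
move=> x; rewrite inE; apply/semiball_genP/orP.
  case=> -[|b s] Ex /andP[Ps s_le]; [left | right].
    by apply/eqP/val_inj.
  case/andP: Ps => Kab Ps; apply/allpairsPdep.
  exists b, (exist _ (b :: s) Ps : G); split; first by rewrite mem_filter Kab mem_enum.
    by apply/semiball_genP; exists s => //; apply/andP.
  by apply: val_inj; rewrite Ex val_mul_gen //= Kab.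
case=> [/eqP -> | /allpairsPdep[b [y [+ y_in ->]]]]; first by exists [::].
rewrite mem_filter => /andP[Kab _].
have [s Ey /andP[Ps s_le]] := semiball_genP _ _ _ y_in.
exists (val y); first exact: val_mul_gen_semiball Kab y_in.
by rewrite Ey /= Kab Ps.
Qed.

Lemma uniq_semiball_split a n : uniq (semiball_split a n).
Proof.
rewrite /semiball_split cons_uniq; apply/andP; split.
  apply/negP => /allpairsPdep[b [y [+ y_in /(congr1 (fun g : G => size (val g)))]]].
  rewrite mem_filter => /andP[Kab _]; have [s Ey _] := semiball_genP _ _ _ y_in.
  by rewrite (val_mul_gen_semiball Kab y_in) Ey.
apply: (@allpairs_uniq_dep _ (fun=> G)); first by rewrite filter_uniq ?enum_uniq.
  by move=> b _; exact: undup_uniq.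
move=> _ _ /allpairsPdep[b1 [y1 [+ y1_in ->]]] /allpairsPdep[b2 [y2 [+ y2_in ->]]].
rewrite !mem_filter => /andP[Kab1 _] /andP[Kab2 _] /(congr1 val).
rewrite (val_mul_gen_semiball Kab1 y1_in) (val_mul_gen_semiball Kab2 y2_in).
case=> /val_inj Ey; subst y2.
have [s1 E1 _] := semiball_genP _ _ _ y1_in; have [s2 E2 _] := semiball_genP _ _ _ y2_in.
by move: E2; rewrite E1 => -[->].
Qed.

Lemma size_semiball_gen_succ a n : size (semiball (gen a) n.+1) =
  (\sum_(b | K a b) size (semiball (gen b) n)).+1.
Proof.
rewrite (perm_size (uniq_perm (undup_uniq _) (uniq_semiball_split a n)
                              (mem_semiball_split a n))).
by rewrite /= size_allpairs_dep sumnE big_map big_filter big_enum_cond.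
Qed.

Lemma size_semiball_gen_gt0 a n : 0 < size (semiball (gen a) n).
Proof. by case: (semiball _ _) (gen_in_semiball a n). Qed.

End Semiballs.

Section Patterns.
Variables (k : nat) (K : rel 'I_k) (A : finType) (X : set (G K -> A)).
Local Notation G := (Defs.G K).
Local Notation one := (Defs.one K).
Local Notation mul := (Defs.mul (K := K)).
Local Notation gen := (Defs.gen K).
Local Notation semiball := (Defs.semiball (K := K)).

Definition accepted_patterns (D : seq G) : {set {ffun 'I_(size D) -> A}} :=
  [set f : {ffun 'I_(size D) -> A} |
     `[< exists t, X t /\ exists g : G,
           forall i : 'I_(size D), t (mul g (nth one D i)) = f i >]].

Definition npatterns_on (D : seq G) : nat := #|accepted_patterns D|.

Lemma npatternsE g n : npatterns X g n = npatterns_on (semiball g n).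
Proof. by apply: eq_card => f; rewrite [in LHS]unfold_in inE; apply/asboolP/idP. Qed.

Definition window (t : G -> A) (g : G) (D : seq G) : {ffun 'I_(size D) -> A} :=
  [ffun i : 'I_(size D) => t (mul g (nth one D i))].

Lemma window_accepted t g D : X t -> window t g D \in accepted_patterns D.
Proof.
move=> Xt; rewrite inE; apply/asboolP.
by exists t; split => //; exists g => i; rewrite ffunE.
Qed.

Lemma accepted_patternsP D f : f \in accepted_patterns D ->
  exists t g, X t /\ f = window t g D.
Proof.
rewrite inE => /asboolP[t [Xt [g Ef]]].
by exists t, g; split; last by apply/ffunP => i; rewrite ffunE.
Qed.

Definition reindex m n (idx : 'I_m -> 'I_n) (f : {ffun 'I_n -> A}) : {ffun 'I_m -> A} :=
  [ffun i => f (idx i)].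

Lemma reindex_window D D' (idx : 'I_(size D) -> 'I_(size D')) t g g' :
    (forall i : 'I_(size D), mul g (nth one D i) = mul g' (nth one D' (idx i))) ->
  reindex idx (window t g' D') = window t g D.
Proof. by move=> Eg; apply/ffunP => i; rewrite !ffunE Eg. Qed.

Lemma npatterns_on_reindex D D' (idx : 'I_(size D) -> 'I_(size D')) (shift : G -> G) :
    (forall g (i : 'I_(size D)),
       mul g (nth one D i) = mul (shift g) (nth one D' (idx i))) ->
  npatterns_on D <= npatterns_on D'.
Proof.
move=> Eg; apply: leq_trans (leq_imset_card (reindex idx) _).
apply/subset_leq_card/fintype.subsetP => _ /accepted_patternsP[t [g [Xt ->]]].
apply/imsetP; exists (window t (shift g) D'); first exact: window_accepted.
by rewrite (reindex_window _ (Eg g)).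
Qed.

Lemma reindex_accepted D D' (idx : 'I_(size D) -> 'I_(size D')) f :
    (forall i : 'I_(size D), nth one D' (idx i) = nth one D i) ->
  f \in accepted_patterns D' -> reindex idx f \in accepted_patterns D.
Proof.
move=> Enth /accepted_patternsP[t [g [Xt ->]]].
by rewrite (@reindex_window _ _ _ _ g) ?window_accepted // => i; rewrite Enth.
Qed.

Lemma npatterns_on_sub D D' : {subset D <= D'} -> npatterns_on D <= npatterns_on D'.
Proof.
move=> sDD'.
have idxP (i : 'I_(size D)) : index (nth one D i) D' < size D'.
  by rewrite index_mem sDD' ?mem_nth.
apply: (@npatterns_on_reindex _ _ (fun i => Ordinal (idxP i)) id) => g i.
by rewrite /= nth_index ?sDD' ?mem_nth.
Qed.

Lemma npatterns_on_map_mul g0 D :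
    {in D, forall d, val (mul g0 d) = val g0 ++ val d} ->
  npatterns_on (map (mul g0) D) <= npatterns_on D.
Proof.
move=> Eg0.
apply: (@npatterns_on_reindex _ _ (cast_ord (size_map _ _)) (mul^~ g0)) => g i.
have i_lt : i < size D by rewrite -[X in _ < X](size_map (mul g0)).
apply: val_inj; rewrite /= (nth_map one) // Eg0 ?mem_nth //.
by rewrite foldl_cat.
Qed.

Lemma npatterns_on_cat D1 D2 :
  npatterns_on (D1 ++ D2) <= npatterns_on D1 * npatterns_on D2.
Proof.
pose c := size_cat D1 D2.
pose idx1 i := cast_ord (esym c) (lshift (size D2) i).
pose idx2 i := cast_ord (esym c) (rshift (size D1) i).
have nth1 i : nth one (D1 ++ D2) (idx1 i) = nth one D1 i by rewrite nth_cat /= ltn_ord.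
have nth2 i : nth one (D1 ++ D2) (idx2 i) = nth one D2 i.
  by rewrite nth_cat /= ltnNge leq_addr addKn.
pose res f := (reindex idx1 f, reindex idx2 f).
have res_inj : injective res.
  move=> f f' [E1 E2]; apply/ffunP => i.
  rewrite -(cast_ordK c i) -(splitK (cast_ord c i)); case: (fintype.split _) => j.
    by have := congr1 (fun f : {ffun _ -> A} => f j) E1; rewrite !ffunE.
  by have := congr1 (fun f : {ffun _ -> A} => f j) E2; rewrite !ffunE.
rewrite /npatterns_on -cardsX -(card_imset _ res_inj).
apply/subset_leq_card/fintype.subsetP => _ /imsetP[f f_acc ->].
by rewrite inE /= !reindex_accepted.
Qed.

Lemma npatterns_on_ub D : npatterns_on D <= #|A| ^ size D.
Proof. by rewrite /npatterns_on -[X in _ ^ X]card_ord -card_ffun max_card. Qed.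

Lemma npatterns_on_flatten (ss : seq (seq G)) :
  npatterns_on (flatten ss) <= \prod_(s <- ss) npatterns_on s.
Proof.
elim: ss => [|s ss IHss]; first by rewrite big_nil (leq_trans (npatterns_on_ub _)).
by rewrite big_cons (leq_trans (npatterns_on_cat _ _)) ?leq_mul.
Qed.

Lemma npatterns_gen_succ a n : npatterns X (gen a) n.+1 <=
  #|A| * \prod_(b | K a b) npatterns X (gen b) n.
Proof.
have split_sub : {subset semiball (gen a) n.+1 <= semiball_split K a n}.
  by move=> x; rewrite mem_semiball_split.
rewrite !npatternsE (leq_trans (npatterns_on_sub split_sub)) //.
rewrite /semiball_split -cat1s (leq_trans (npatterns_on_cat _ _)) // leq_mul //.
  by rewrite (leq_trans (npatterns_on_ub _)) ?expn1.
rewrite (leq_trans (npatterns_on_flatten _)) // big_map big_filter big_enum_cond.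
apply: leq_prod => b /andP[_ Kab]; rewrite npatternsE.
by apply: npatterns_on_map_mul => y y_in; rewrite (val_mul_gen_semiball Kab y_in).
Qed.

End Patterns.

Section LogNat.
Variable R : realType.
Local Open Scope ring_scope.

Definition lnn (m : nat) : R := ln m%:R.

Lemma lnn0 : lnn 0 = 0.
Proof. by rewrite /lnn ln0. Qed.

Lemma lnn_ge0 m : 0 <= lnn m.
Proof. by case: m => [|m]; rewrite ?lnn0 // /lnn ln_ge0 // ler1n. Qed.

Lemma ler_lnn m n : (m <= n)%N -> lnn m <= lnn n.
Proof.
case: m => [|m] le_mn; first by rewrite lnn0 lnn_ge0.
by rewrite /lnn ler_ln ?posrE ?ltr0n ?ler_nat // (leq_trans _ le_mn).
Qed.

Lemma lnnM_le m n : lnn (m * n) <= lnn m + lnn n.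
Proof.
case: m => [|m]; first by rewrite mul0n lnn0 add0r lnn_ge0.
case: n => [|n]; first by rewrite muln0 lnn0 addr0 lnn_ge0.
by rewrite /lnn natrM lnM ?posrE ?ltr0n.
Qed.

Lemma lnnX_le m e : lnn (m ^ e) <= e%:R * lnn m.
Proof.
elim: e => [|e IHe]; first by rewrite expn0 /lnn ln1 mul0r.
by rewrite expnS (le_trans (lnnM_le _ _)) // -add1n natrD mulrDl mul1r lerD2l.
Qed.

Lemma lnn_prod_le (I : Type) (r : seq I) (P : pred I) (F : I -> nat) :
  lnn (\prod_(i <- r | P i) F i) <= \sum_(i <- r | P i) lnn (F i).
Proof.
apply: (big_ind2 (fun m x => lnn m <= x)) => [|m1 m2 x1 x2 le1 le2|//].
  by rewrite /lnn ln1.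
by rewrite (le_trans (lnnM_le _ _)) ?lerD.
Qed.

End LogNat.

Section LogPatterns.
Variables (R : realType) (k : nat) (K : rel 'I_k) (A : finType) (X : set (G K -> A)).
Local Open Scope ring_scope.

Lemma lnn_npatterns_gen_succ a n :
  lnn R (npatterns X (gen K a) n.+1) <=
  lnn R #|A| + \sum_(b | K a b) lnn R (npatterns X (gen K b) n).
Proof.
apply: le_trans (ler_lnn R (npatterns_gen_succ X a n)) _.
by rewrite (le_trans (lnnM_le _ _ _)) // lerD2l lnn_prod_le.
Qed.

Lemma lnn_npatterns_le g n :
  lnn R (npatterns X g n) <= (size (semiball g n))%:R * lnn R #|A|.
Proof.
by rewrite npatternsE (le_trans (ler_lnn R (npatterns_on_ub X _))) ?lnnX_le.
Qed.

End LogPatterns.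

Section WalkGrowth.
Variables (k : nat) (K : rel 'I_k) (w : 'I_k -> nat -> nat).
Hypothesis w_gt0 : forall a n, 0 < w a n.
Hypothesis wS : forall a n, w a n.+1 = (\sum_(b | K a b) w b n).+1.

Lemma w_edge_lt a b n : K a b -> w b n < w a n.+1.
Proof. by move=> Kab; rewrite wS ltnS (bigD1 b) //= leq_addr. Qed.

Lemma w_reach_in l a c n : reach_in K l a c -> w c n <= w a (n + l).
Proof.
elim: l a => [|l IHl] a /=; first by move/eqP ->; rewrite addn0.
case/existsP => d /andP[Kad /IHl le_cd].
by rewrite addnS (leq_trans le_cd) // ltnW // w_edge_lt.
Qed.

Let wmax n := \max_(c < k) w c n.

Let w_le_wmax a n : w a n <= wmax n.
Proof. exact: (@leq_bigmax_cond _ xpredT (fun c => w c n) a). Qed.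

Let wmaxS_le n : wmax n.+1 <= k.+1 * wmax n.
Proof.
apply/bigmax_leqP => a _; rewrite wS mulSn -addn1 addnC leq_add //.
  exact: leq_trans (w_gt0 a n) (w_le_wmax a n).
apply: (@leq_trans (\sum_(b | K a b) wmax n)); first by apply: leq_sum => b _.
by rewrite sum_nat_const leq_mul2r -[X in _ <= X]card_ord max_card orbT.
Qed.

Let wmax_add_le n l : wmax (n + l) <= k.+1 ^ l * wmax n.
Proof.
elim: l => [|l IHl]; first by rewrite addn0 mul1n.
by rewrite addnS expnS -mulnA (leq_trans (wmaxS_le _)) // leq_mul2l IHl orbT.
Qed.

Lemma w_le_reach_all l a b n : (forall c, reach_in K l b c) ->
  w a (n + l).+1 <= k.+1 ^ l.+1 * w b (n + l).
Proof.
move=> reach_b; rewrite -addnS (leq_trans (w_le_wmax a _)) //.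
rewrite (leq_trans (wmax_add_le n l.+1)) // leq_mul2l; apply/orP; right.
by apply/bigmax_leqP => c _; rewrite w_reach_in.
Qed.

Lemma w_gt_n : (forall c, exists d, K c d) -> forall a n, n < w a n.
Proof.
move=> succ a n; elim: n a => [|n IHn] a; first exact: w_gt0.
by have [d Kad] := succ a; exact: leq_ltn_trans (IHn d) (w_edge_lt _ Kad).
Qed.

End WalkGrowth.

Section LimsupNear.
Variable R : realType.
Local Open Scope classical_set_scope.
Local Open Scope ereal_scope.

Lemma limn_esup_le_near (u : (\bar R)^nat) c :
  (\forall n \near \oo, u n <= c) -> limn_esup u <= c.
Proof.
move=> uc; rewrite /limn_esup limf_esupE.
apply: (@le_trans _ _ (ereal_sup (u @` [set n | u n <= c]))).
  by apply: ereal_inf_lbound; exists [set n | u n <= c].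
by apply: ge_ereal_sup => _ [n ucn <-].
Qed.

Lemma limn_esup_lt_near (u : (\bar R)^nat) c :
  limn_esup u < c -> \forall n \near \oo, u n < c.
Proof.
rewrite /limn_esup limf_esupE => /ereal_inf_lt[_ [V Voo <-] supV_lt].
apply: filterS Voo => n Vn; rewrite (le_lt_trans _ supV_lt) //.
by apply: ereal_sup_ubound; exists n.
Qed.

End LimsupNear.

Section RatioLimsup.
Variables (R : realType) (k : nat) (K : rel 'I_k).
Variables (w : 'I_k -> nat -> nat) (L : 'I_k -> nat -> R) (B : R).
Local Open Scope ring_scope.
Local Open Scope classical_set_scope.
Hypothesis w_gt0 : forall a n, (0 < w a n)%N.
Hypothesis wS : forall a n, w a n.+1 = (\sum_(b | K a b) w b n).+1.
Hypothesis L_ge0 : forall a n, 0 <= L a n.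
Hypothesis L_le : forall a n, L a n <= (w a n)%:R * B.
Hypothesis L_succ : forall a n, L a n.+1 <= B + \sum_(b | K a b) L b n.

Definition ratio a n : R := L a n / (w a n)%:R.

Definition ratio_limsup a : R := fine (limn_esup (fun n => (ratio a n)%:E)).

Lemma natr_w_gt0 a n : 0 < (w a n)%:R :> R.
Proof. by rewrite ltr0n. Qed.

Lemma mul_ratio a n : (w a n)%:R * ratio a n = L a n.
Proof. by rewrite /ratio mulrC divfK // gt_eqF // natr_w_gt0. Qed.

Lemma ratio_ge0 a n : 0 <= ratio a n.
Proof. by rewrite divr_ge0. Qed.

Lemma ratio_le a n : ratio a n <= B.
Proof. by rewrite ler_pdivrMr ?natr_w_gt0 // mulrC. Qed.

Let limn_esup_ratio_ge0 a : (0 <= limn_esup (fun n => (ratio a n)%:E))%E.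
Proof.
by apply: limf_esup_ge0 => [|n]; [exact: filter_not_empty | rewrite lee_fin ratio_ge0].
Qed.

Lemma limn_esup_ratio a :
  limn_esup (fun n => (ratio a n)%:E) = (ratio_limsup a)%:E.
Proof.
have leB : (limn_esup (fun n => (ratio a n)%:E) <= B%:E)%E.
  by apply: limn_esup_le_near; apply: nearW => n; rewrite lee_fin ratio_le.
by rewrite fineK // ge0_fin_numE ?limn_esup_ratio_ge0 // (le_lt_trans leB) ?ltry.
Qed.

Lemma ratio_limsup_ge0 a : 0 <= ratio_limsup a.
Proof. by rewrite -lee_fin -limn_esup_ratio. Qed.

Lemma near_ratio_le_limsup e : 0 < e ->
  \forall n \near \oo, forall c, ratio c n <= ratio_limsup c + e.
Proof.
move=> e_gt0; apply: filter_forall => c.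
have : (limn_esup (fun n => (ratio c n)%:E) < (ratio_limsup c + e)%:E)%E.
  by rewrite limn_esup_ratio lte_fin ltrDl.
by move/limn_esup_lt_near; apply: filterS => n /ltW; rewrite lee_fin.
Qed.

Lemma ratio_succ_bound a b n (H d : R) : K a b -> 0 <= H ->
    (forall c, ratio c n <= H) -> ratio b n <= H - d ->
  (w a n.+1)%:R * ratio a n.+1 <= B + (w a n.+1)%:R * H - (w b n)%:R * d.
Proof.
move=> Kab H_ge0 ratio_le_H ratio_b_le.
rewrite mul_ratio (le_trans (L_succ a n)) // -addrA lerD2l (bigD1 b) //=.
set S := \sum_(c | K a c && (c != b)) _.
have le_S : S <= (\sum_(c | K a c && (c != b)) w c n)%:R * H.
  rewrite natr_sum mulr_suml; apply: ler_sum => c _.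
  by rewrite -mul_ratio ler_wpM2l.
have le_b : L b n <= (w b n)%:R * (H - d) by rewrite -mul_ratio ler_wpM2l.
have le_w : (w b n)%:R + (\sum_(c | K a c && (c != b)) w c n)%:R
              <= (w a n.+1)%:R :> R.
  by rewrite -natrD ler_nat wS [X in (_ <= X.+1)%N](bigD1 b).
have := ler_wpM2r H_ge0 le_w; lra.
Qed.

Variable M : nat.
Hypothesis M_gt0 : (0 < M)%N.
Hypothesis reach_all : forall b c, reach_in K M b c.

Let succ_total c : exists d, K c d.
Proof.
by move: (reach_all c c); case: M M_gt0 => // m _ /existsP[d /andP[Kcd _]]; exists d.
Qed.

Lemma ratio_limsup_edge a b : (forall c, ratio_limsup c <= ratio_limsup a) ->
  K a b -> ratio_limsup a <= ratio_limsup b.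
Proof.
move=> a_max Kab; rewrite leNgt; apply/negP => lt_ba.
set H := ratio_limsup a; set d := H - ratio_limsup b.
(* The edge to b has relative weight at least 1/C, which pulls the ratio at a
   down by d/C = 4e, while the slack in the limsups and the term B cost 2e. *)
pose C := (k.+1 ^ M.+1)%N; pose e := d / C%:R / 4.
have C_gt0 : 0 < C%:R :> R by rewrite ltr0n expn_gt0.
have e_gt0 : 0 < e by rewrite !divr_gt0 // subr_gt0.
have d_eq : d = 4 * e * C%:R by rewrite /e; field; rewrite gt_eqF.
have near_B : \forall n \near \oo, B <= e * (w a n.+1)%:R.
  apply: filterS (nbhs_infty_ger (B / e)) => n le_n.
  rewrite -ler_pdivrMl // mulrC (le_trans le_n) // ler_nat ltnW //.
  exact: ltn_trans (ltnSn n) (w_gt_n w_gt0 wS succ_total a n.+1).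
have near_cmp : \forall n \near \oo, (w a n.+1 <= C * w b n)%N.
  apply: filterS (nbhs_infty_ge M) => n le_Mn.
  by have := w_le_reach_all w_gt0 wS a (n - M) (reach_all b); rewrite subnK.
have : \forall n \near \oo, ((ratio a n)%:E <= (H - 2 * e)%:E)%E.
  apply: near_inftyS; near=> n; rewrite lee_fin.
  have ratio_le_lim : forall c, ratio c n <= ratio_limsup c + e.
    by near: n; exact: near_ratio_le_limsup.
  have ratio_le_He c : ratio c n <= H + e.
    exact: le_trans (ratio_le_lim c) (lerD (a_max c) (lexx e)).
  have ratio_b_le : ratio b n <= H + e - d by have := ratio_le_lim b; rewrite /d; lra.
  have He_ge0 : 0 <= H + e by rewrite addr_ge0 ?ratio_limsup_ge0 ?ltW.
  have step := ratio_succ_bound Kab He_ge0 ratio_le_He ratio_b_le.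
  have B_le : B <= e * (w a n.+1)%:R by near: n.
  have : (w a n.+1)%:R <= C%:R * (w b n)%:R :> R by rewrite -natrM ler_nat; near: n.
  move/(ler_wpM2l (ltW e_gt0)) => cmp.
  rewrite -(ler_pM2l (natr_w_gt0 a n.+1)); rewrite d_eq in step; lra.
move/limn_esup_le_near; rewrite limn_esup_ratio lee_fin -/H; lra.
Unshelve. all: by end_near.
Qed.

Lemma ratio_limsup_const a b : ratio_limsup a = ratio_limsup b.
Proof.
have [m _ m_maxP] := @arg_maxP _ _ 'I_k a xpredT ratio_limsup isT.
have m_max c : ratio_limsup c <= ratio_limsup m := m_maxP c isT.
have reach_max l x c : ratio_limsup x = ratio_limsup m ->
    reach_in K l x c -> ratio_limsup c = ratio_limsup m.
  elim: l x => [|l IHl] x /= x_max; first by move/eqP <-.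
  case/existsP => y /andP[Kxy /IHl]; apply; apply/eqP; rewrite eq_le m_max.
  by rewrite -x_max ratio_limsup_edge // => z; rewrite x_max m_max.
by rewrite (reach_max M m a) ?(reach_max M m b).
Qed.

End RatioLimsup.

Theorem theorem3p1 (R : realType) (k : nat) (K : rel 'I_k) (A : finType)
    (X : set (G K -> A)) :
  is_tree_shift X -> primitive (Kmx K) ->
  forall i j : 'I_k, stem_entropy R X i = stem_entropy R X j.
Proof.
(* The counting argument applies to any set of configurations. *)
move=> _ [M [M_gt0 K_pos]] i j.
have reach_all b c : reach_in K M b c by apply/mxpow_reach_in/lt0r_neq0/K_pos.
pose w a n := size (semiball (gen K a) n).
pose L a n := lnn R (npatterns X (gen K a) n).
have w_gt0 a n : (0 < w a n)%N := size_semiball_gen_gt0 K a n.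
have wS a n : w a n.+1 = (\sum_(b | K a b) w b n).+1 := size_semiball_gen_succ K a n.
have L_ge0 a n : (0 <= L a n)%R := lnn_ge0 R _.
have L_le a n : (L a n <= (w a n)%:R * lnn R #|A|)%R := lnn_npatterns_le R X _ n.
have L_succ a n : (L a n.+1 <= lnn R #|A| + \sum_(b | K a b) L b n)%R :=
  lnn_npatterns_gen_succ R X a n.
have entropyE a : stem_entropy R X a = (ratio_limsup w L a)%:E :=
  limn_esup_ratio w_gt0 L_ge0 L_le a.
by rewrite !entropyE (ratio_limsup_const w_gt0 wS L_ge0 L_le L_succ M_gt0 reach_all i j).
Qed.
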